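(* For any ${\bm{p}}\in\Delta_K^+=\{{\bm{p}}\in\mathbb{R}^K:{\bm{p}}>0,\ \sum_kp_k=1\}$, if $L^{\mathrm{same}}({\bm{p}})=L^*_N({\bm{p}})$, then $$\sum_{k=1}^Kp_k\frac{\partial f_k({\bm{p}})}{\partial p_i}=0\quad\text{for all }i\in[K].$$
   Context: Setting: distributions $\mathcal{D}_1,\dots,\mathcal{D}_K$ on $\mathcal{Z}$, a loss $\ell(h,{\bm{z}})$ (all expectations finite), $N\ge1$, a learning algorithm $\mathcal{A}:\mathcal{Z}^N\to\mathcal{H}$. For ${\bm{r}}\in\Delta_K=\{{\bm{r}}\ge0:\sum_kr_k=1\}$, $\bar e_k({\bm{r}})=\mathbb{E}_{S\sim(\sum_jr_j\mathcal{D}_j)^N}\mathbb{E}_{{\bm{z}}\sim\mathcal{D}_k}[\ell(\mathcal{A}(S),{\bm{z}})]$; $f_k({\bm{r}})=\bar e_k({\bm{r}}/|{\bm{r}}|)$ on $\mathbb{R}^K_{\ge0}\setminus\{\mathbf{0}\}$; $L_N({\bm{p}},{\bm{r}})=\sum_kp_kf_k({\bm{r}})$, $L^{\mathrm{same}}({\bm{p}})=L_N({\bm{p}},{\bm{p}})$, $L^*_N({\bm{p}})=\min_{{\bm{r}}\in\Delta_K}L_N({\bm{p}},{\bm{r}})$. *)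

From HB Require Import structures.
From mathcomp Require Import all_boot all_order all_algebra.
From mathcomp Require Import all_classical all_reals all_analysis.
Set Implicit Arguments. Unset Strict Implicit. Unset Printing Implicit Defensive.
Import Order.TTheory GRing.Theory Num.Theory.
Import numFieldNormedType.Exports.
Local Open Scope classical_set_scope.
Local Open Scope ring_scope.

Section Setting.
Context {R : realType} {d : measure_display} {Z : measurableType d} {H : Type}
  {K N : nat} (D : 'I_K -> probability Z R) (loss : H -> Z -> R)
  (A : N.-tuple Z -> H).

Definition simplex : set 'rV[R]_K :=
  [set r | (forall k, 0 <= r ord0 k) /\ \sum_k r ord0 k = 1].

Definition simplex_pos : set 'rV[R]_K :=
  [set r | (forall k, 0 < r ord0 k) /\ \sum_k r ord0 k = 1].

(* Expectation of h : Z -> R under the mixture sum_j r_j D_j. *)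
Definition mixE (r : 'rV[R]_K) (h : Z -> R) : R :=
  \sum_j r ord0 j * Rintegral (D j) setT h.

(* Expectation over S = (z_1,...,z_n) i.i.d. from the mixture sum_j r_j D_j,
   computed as the iterated integral (Fubini) over the n coordinates. *)
Fixpoint sampleE (r : 'rV[R]_K) (n : nat) : (n.-tuple Z -> R) -> R :=
  match n return (n.-tuple Z -> R) -> R with
  | 0 => fun g => g [tuple]
  | n'.+1 => fun g =>
      mixE r (fun z => sampleE r (fun t : n'.-tuple Z => g [tuple of z :: t]))
  end.

Fixpoint iterE (n : nat) : n.-tuple 'I_K -> (n.-tuple Z -> \bar R) -> \bar R :=
  match n return n.-tuple 'I_K -> (n.-tuple Z -> \bar R) -> \bar R with
  | 0 => fun _ g => g [tuple]
  | n'.+1 => fun js g =>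
      (\int[D (thead js)]_z
          iterE [tuple of behead js]
                (fun t : n'.-tuple Z => g [tuple of z :: t]))%E
  end.

Definition ebar (k : 'I_K) (r : 'rV[R]_K) : R :=
  sampleE r (fun S : N.-tuple Z => Rintegral (D k) setT (fun z => loss (A S) z)).

Definition l1 (r : 'rV[R]_K) : R := \sum_k r ord0 k.

Definition f (k : 'I_K) (r : 'rV[R]_K) : R := ebar k ((l1 r)^-1 *: r).

Definition L_N (p r : 'rV[R]_K) : R := \sum_k p ord0 k * f k r.

Definition L_same (p : 'rV[R]_K) : R := L_N p p.

Definition L_star (p : 'rV[R]_K) : R := inf [set L_N p r | r in simplex].

(* "all expectations finite": for every choice of the mixture components
   js_1..js_N of the sample and every k, the loss is integrable w.r.t.
   D_{js_1} x ... x D_{js_N} x D_k (iterated integral of |loss| finite). *)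
Definition all_expectations_finite : Prop :=
  forall (js : N.-tuple 'I_K) (k : 'I_K),
    (iterE js (fun S => \int[D k]_z (`| loss (A S) z |)%:E) < +oo)%E.

End Setting.

Definition partial {R : realType} {K : nat} (g : 'rV[R]_K -> R)
  (x : 'rV[R]_K) (i : 'I_K) : R := derive g x (delta_mx ord0 i).

(* Drawing the mixture component of each sample point separately writes
   ebar_k(r) as the polynomial sum_js (prod_m r_(js_m)) c_k(js), where c_k(js)
   is the risk when z_m ~ D_(js_m); the finiteness of all these expectations is
   what allows sums and integrals to be exchanged.  Hence f_k is differentiable
   wherever |r| <> 0.  Since f_k(c r) = f_k(r) for c <> 0, L_N(p, r) >= L*_N(p)
   for every nonzero r >= 0, not only on the simplex.  So when
   L_same(p) = L*_N(p) and p > 0, t |-> L_N(p, p + t e_i) has a local minimum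
   at t = 0, where its derivative is sum_k p_k df_k(p)/dp_i. *)

From HB Require Import structures.
From mathcomp Require Import all_boot all_order all_algebra.
From mathcomp Require Import all_classical all_reals all_analysis.
From mathcomp Require Import measurable_realfun.
From mathcomp Require Import lra.
Import Order.TTheory GRing.Theory Num.Theory.
Import numFieldNormedType.Exports.
Set Implicit Arguments. Unset Strict Implicit. Unset Printing Implicit Defensive.
Local Open Scope classical_set_scope.
Local Open Scope ring_scope.

Section mixture_polynomial.
Context (R : realType) (K : nat).
Implicit Types (r : 'rV[R]_K).

(* mix_poly r c = \sum_(js : n.-tuple 'I_K) (\prod_m r_(js_m)) * c js *)
Fixpoint mix_poly r n : (n.-tuple 'I_K -> R) -> R :=
  match n return (n.-tuple 'I_K -> R) -> R with
  | 0 => fun c => c [tuple]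
  | n'.+1 => fun c =>
      \sum_j r ord0 j * mix_poly r (fun js : n'.-tuple 'I_K => c [tuple of j :: js])
  end.

Lemma normr_mix_poly_le r n (c : n.-tuple 'I_K -> R) (M : R) :
  simplex r -> (forall js, `|c js| <= M) -> `|mix_poly r c| <= M.
Proof.
move=> [r_ge0 sum_r]; elim: n c => [|n IHn] c c_le //=.
apply: le_trans (ler_norm_sum _ _ _) _.
rewrite -[leRHS]mul1r -sum_r mulr_suml; apply: ler_sum => j _.
by rewrite normrM ger0_norm // ler_wpM2l // IHn.
Qed.

Lemma mix_poly_derivable (u : R -> 'rV[R]_K) (t0 : R) n (c : n.-tuple 'I_K -> R) :
  (forall j, derivable (fun t => u t ord0 j) t0 1) ->
  derivable (fun t => mix_poly (u t) c) t0 1.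
Proof.
move=> du; elim: n c => [|n IHn] c /=; first exact: derivable_cst.
rewrite -fct_sumE; apply: derivable_sum => j.
exact: derivableM.
Qed.

End mixture_polynomial.

Lemma measurable_EFin_normr (R : realType) dX (X : measurableType dX) (g : X -> R) :
  measurable_fun setT g -> measurable_fun setT (fun x => (`|g x|)%:E).
Proof.
by move=> mg; apply/measurable_EFinP; exact: measurableT_comp (@normr_measurable R setT) mg.
Qed.

Section parametric_integral.
Context (R : realType) d (Z : measurableType d) dX (X : measurableType dX).
Variable mu : {sigma_finite_measure set Z -> \bar R}.

Lemma measurable_integral_param (h : (X * Z)%type -> \bar R) :
  measurable_fun setT h -> measurable_fun setT (fun x => (\int[mu]_z h (x, z))%E).
Proof.
move=> mh.
have -> : (fun x => \int[mu]_z h (x, z))%E =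
    (fun x => \int[mu]_z h^\+ (x, z) - \int[mu]_z h^\- (x, z))%E.
  apply/funext => x; rewrite [LHS]integralE.
  under eq_integral do rewrite funepos_comp.
  by under [X in (_ - X)%E]eq_integral do rewrite funeneg_comp.
apply: emeasurable_funB.
  exact: measurable_fun_fubini_tonelli_F (measurable_funepos mh) (fun _ => funepos_ge0 _ _).
exact: measurable_fun_fubini_tonelli_F (measurable_funeneg mh) (fun _ => funeneg_ge0 _ _).
Qed.

Lemma measurable_Rintegral_param (h : (X * Z)%type -> R) :
  measurable_fun setT h ->
  measurable_fun setT (fun x => Rintegral mu setT (fun z => h (x, z))).
Proof.
move=> mh; apply: measurableT_comp (fine_measurable measurableT) _.
exact/(measurable_integral_param (h := EFin \o h))/measurable_EFinP.
Qed.

End parametric_integral.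

Section integral_lemmas.
Context (R : realType) d (Z : measurableType d).
Variable mu : {measure set Z -> \bar R}.

(* Unlike le_normr_Rintegral, no integrability is needed: otherwise the
   Rintegral is 0. *)
Lemma EFin_normr_Rintegral_le (F : Z -> R) : measurable_fun setT F ->
  ((`|Rintegral mu setT F|)%:E <= \int[mu]_z (`|F z|)%:E)%E.
Proof.
move=> mF; rewrite /Rintegral.
have [fin_int|] := boolP ((\int[mu]_z (F z)%:E)%E \is a fin_num).
  rewrite -abse_EFin fineK //.
  apply: le_trans (le_abse_integral _ _ _) _ => //; exact/measurable_EFinP.
by rewrite fin_numE negb_and !negbK => /orP[] /eqP ->; rewrite normr0 integral_ge0.
Qed.

Lemma Rintegral_sum I (s : seq I) (h : I -> Z -> R) :
  (forall i, mu.-integrable setT (EFin \o h i)) ->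
  Rintegral mu setT (fun z => \sum_(i <- s) h i z) =
  \sum_(i <- s) Rintegral mu setT (h i).
Proof.
move=> ih; elim: s => [|i s IHs].
  by rewrite big_nil; under eq_Rintegral do rewrite big_nil; rewrite Rintegral_cst // mul0r.
rewrite big_cons; under eq_Rintegral do rewrite big_cons.
rewrite RintegralD // ?IHs //.
apply: eq_integrable (integrable_sum measurableT s (fun j _ => ih j)) => // z _.
by rewrite /= sumEFin.
Qed.

Lemma integral_mix_poly K (r : 'rV[R]_K) n (c : Z -> n.-tuple 'I_K -> R) :
  (forall js, mu.-integrable setT (EFin \o (fun z => c z js))) ->
  mu.-integrable setT (EFin \o (fun z => mix_poly r (c z))) /\
  Rintegral mu setT (fun z => mix_poly r (c z)) =
  mix_poly r (fun js => Rintegral mu setT (fun z => c z js)).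
Proof.
elim: n c => [|n IHn] c ic /=; first by split => //; exact: ic.
have {}IHn j := IHn (fun z js => c z [tuple of j :: js]) (fun js => ic _).
have int_j j : mu.-integrable setT
    (EFin \o (fun z => r ord0 j * mix_poly r (fun js => c z [tuple of j :: js]))).
  apply: eq_integrable (integrableZl measurableT (r ord0 j) (proj1 (IHn j))) => //.
split.
  apply: eq_integrable (integrable_sum measurableT _ (fun j _ => int_j j)) => // z _.
  by rewrite /= sumEFin.
rewrite Rintegral_sum //; apply: eq_bigr => j _.
by case: (IHn j) => int_cj <-; rewrite RintegralZl.
Qed.

Lemma ae_forall_fin (I : finType) (P : I -> Z -> Prop) :
  (forall i, {ae mu, forall z, P i z}) -> {ae mu, forall z, forall i, P i z}.
Proof.
move=> aeP.
suff : {ae mu, forall z, forall i, i \in enum I -> P i z}.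
  by apply: filterS => z Pz i; apply: Pz; rewrite mem_enum.
elim: (enum I) => [|i s IHs]; first by apply: filterE => z i; rewrite in_nil.
apply: filterS2 (aeP i) IHs => z Piz Psz j.
by rewrite in_cons => /orP[/eqP ->|]; last exact: Psz.
Qed.

End integral_lemmas.

Section iterated_integrals.
Context (R : realType) d (Z : measurableType d) (K : nat)
  (D : 'I_K -> probability Z R).

Fixpoint iterRint n : n.-tuple 'I_K -> (n.-tuple Z -> R) -> R :=
  match n return n.-tuple 'I_K -> (n.-tuple Z -> R) -> R with
  | 0 => fun _ g => g [tuple]
  | n'.+1 => fun js g =>
      Rintegral (D (thead js)) setT (fun z =>
        iterRint [tuple of behead js] (fun t : n'.-tuple Z => g [tuple of z :: t]))
  end.

Definition iter_integrable n (g : n.-tuple Z -> R) : Prop :=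
  forall js : n.-tuple 'I_K, (iterE D js (fun t => (`|g t|)%:E) < +oo)%E.

Lemma measurable_cons_tuple n (z : Z) :
  measurable_fun [set: n.-tuple Z] (fun t => [tuple of z :: t]).
Proof. exact: (measurable_cons (measurable_cst z) (@measurable_id _ _ _)). Qed.

Lemma measurable_cons_pair n :
  measurable_fun [set: Z * n.-tuple Z] (fun zt => [tuple of zt.1 :: zt.2]).
Proof. exact: (measurable_cons measurable_fst measurable_snd). Qed.

Lemma measurable_cons_param dX (X : measurableType dX) n :
  measurable_fun [set: (X * Z) * n.-tuple Z]
    (fun y => (y.1.1, [tuple of y.1.2 :: y.2])).
Proof.
apply: measurable_fun_pair; first exact: measurableT_comp measurable_fst measurable_fst.
exact: (measurable_cons (measurableT_comp measurable_snd measurable_fst) measurable_snd).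
Qed.

Lemma measurable_sampleE r n dX (X : measurableType dX) (G : (X * n.-tuple Z)%type -> R) :
  measurable_fun setT G -> measurable_fun setT (fun x => sampleE D r (fun t => G (x, t))).
Proof.
elim: n dX X G => [|n IHn] dX X G mG /=; first exact: measurable_fun_pair1.
apply: measurable_sum => j; apply: measurable_funM; first exact: measurable_cst.
pose G' (y : ((X * Z) * n.-tuple Z)%type) := G (y.1.1, [tuple of y.1.2 :: y.2]).
exact: (measurable_Rintegral_param (D j)
  (IHn _ _ G' (measurableT_comp mG (@measurable_cons_param _ X n)))).
Qed.

Lemma measurable_iterRint n (js : n.-tuple 'I_K) dX (X : measurableType dX)
    (G : (X * n.-tuple Z)%type -> R) :
  measurable_fun setT G -> measurable_fun setT (fun x => iterRint js (fun t => G (x, t))).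
Proof.
elim: n js dX X G => [|n IHn] js dX X G mG /=; first exact: measurable_fun_pair1.
pose G' (y : ((X * Z) * n.-tuple Z)%type) := G (y.1.1, [tuple of y.1.2 :: y.2]).
exact: (measurable_Rintegral_param (D (thead js))
  (IHn _ _ _ G' (measurableT_comp mG (@measurable_cons_param _ X n)))).
Qed.

Lemma measurable_iterE n (js : n.-tuple 'I_K) dX (X : measurableType dX)
    (G : (X * n.-tuple Z)%type -> \bar R) :
  measurable_fun setT G -> measurable_fun setT (fun x => iterE D js (fun t => G (x, t))).
Proof.
elim: n js dX X G => [|n IHn] js dX X G mG /=; first exact: measurable_fun_pair1.
pose G' (y : ((X * Z) * n.-tuple Z)%type) := G (y.1.1, [tuple of y.1.2 :: y.2]).
exact: (measurable_integral_param (D (thead js))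
  (IHn _ _ _ G' (measurableT_comp mG (@measurable_cons_param _ X n)))).
Qed.

Lemma measurable_iterRint_cons n (js : n.-tuple 'I_K) (g : n.+1.-tuple Z -> R) :
  measurable_fun setT g ->
  measurable_fun setT (fun z => iterRint js (fun t => g [tuple of z :: t])).
Proof.
move=> mg; exact: (measurable_iterRint js
  (G := fun zt : Z * n.-tuple Z => g [tuple of zt.1 :: zt.2])
  (measurableT_comp mg (@measurable_cons_pair n))).
Qed.

Lemma measurable_iterE_cons n (js : n.-tuple 'I_K) (g : n.+1.-tuple Z -> \bar R) :
  measurable_fun setT g ->
  measurable_fun setT (fun z => iterE D js (fun t => g [tuple of z :: t])).
Proof.
move=> mg; exact: (measurable_iterE js
  (G := fun zt : Z * n.-tuple Z => g [tuple of zt.1 :: zt.2])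
  (measurableT_comp mg (@measurable_cons_pair n))).
Qed.

Lemma iterRint_cons n j (js : n.-tuple 'I_K) (g : n.+1.-tuple Z -> R) :
  iterRint [tuple of j :: js] g =
  Rintegral (D j) setT (fun z => iterRint js (fun t => g [tuple of z :: t])).
Proof.
by rewrite /= theadE; have -> : [tuple of behead [tuple of j :: js]] = js by exact: val_inj.
Qed.

Lemma iterE_cons n j (js : n.-tuple 'I_K) (g : n.+1.-tuple Z -> \bar R) :
  iterE D [tuple of j :: js] g =
  (\int[D j]_z iterE D js (fun t => g [tuple of z :: t]))%E.
Proof.
by rewrite /= theadE; have -> : [tuple of behead [tuple of j :: js]] = js by exact: val_inj.
Qed.

Lemma iterE_ge0 n (js : n.-tuple 'I_K) (g : n.-tuple Z -> \bar R) :
  (forall t, 0 <= g t)%E -> (0 <= iterE D js g)%E.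
Proof.
elim: n js g => [|n IHn] js g g0 /=; first exact: g0.
by apply: integral_ge0 => z _; apply: IHn.
Qed.

Lemma le_iterE n (js : n.-tuple 'I_K) (g1 g2 : n.-tuple Z -> \bar R) :
  measurable_fun setT g1 -> measurable_fun setT g2 ->
  (forall t, 0 <= g1 t)%E -> (forall t, g1 t <= g2 t)%E ->
  (iterE D js g1 <= iterE D js g2)%E.
Proof.
elim: n js g1 g2 => [|n IHn] js g1 g2 mg1 mg2 g1_ge0 g12 /=; first exact: g12.
apply: ge0_le_integral => //.
- by move=> z _; apply: iterE_ge0.
- exact: measurable_iterE_cons.
- exact: measurable_iterE_cons.
- move=> z _; apply: IHn => //.
  + exact: measurableT_comp mg1 (@measurable_cons_tuple n z).
  + exact: measurableT_comp mg2 (@measurable_cons_tuple n z).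
Qed.

Lemma EFin_normr_iterRint_le n (js : n.-tuple 'I_K) (g : n.-tuple Z -> R) :
  measurable_fun setT g ->
  ((`|iterRint js g|)%:E <= iterE D js (fun t => (`|g t|)%:E))%E.
Proof.
elim: n js g => [|n IHn] js g mg /=; first by [].
have mIg := measurable_iterRint_cons [tuple of behead js] mg.
apply: le_trans (EFin_normr_Rintegral_le _ mIg) _.
apply: ge0_le_integral => //.
- exact: measurable_EFin_normr.
- apply: (@measurable_iterE_cons n _ (fun t => (`|g t|)%:E)).
  exact: measurable_EFin_normr.
- by move=> z _; apply: IHn; exact: measurableT_comp mg (@measurable_cons_tuple n z).
Qed.

Lemma integrable_iterRint_cons n (g : n.+1.-tuple Z -> R) j (js : n.-tuple 'I_K) :
  measurable_fun setT g -> iter_integrable g ->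
  (D j).-integrable setT (EFin \o (fun z => iterRint js (fun t => g [tuple of z :: t]))).
Proof.
move=> mg ig; have mIg := measurable_iterRint_cons js mg.
apply/integrableP; split; first exact/measurable_EFinP.
apply: le_lt_trans (ig [tuple of j :: js]); rewrite iterE_cons.
apply: ge0_le_integral => //.
- exact: measurable_EFin_normr.
- apply: (@measurable_iterE_cons n _ (fun t => (`|g t|)%:E)).
  exact: measurable_EFin_normr.
- move=> z _; apply: EFin_normr_iterRint_le.
  exact: measurableT_comp mg (@measurable_cons_tuple n z).
Qed.

Lemma ae_iter_integrable_cons n (g : n.+1.-tuple Z -> R) j :
  measurable_fun setT g -> iter_integrable g ->
  {ae D j, forall z, iter_integrable (fun t => g [tuple of z :: t])}.
Proof.
move=> mg ig; apply: ae_forall_fin => js.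
set F := fun z => iterE D js (fun t => (`|g [tuple of z :: t]|)%:E).
have mF : measurable_fun setT F.
  apply: (@measurable_iterE_cons n _ (fun t => (`|g t|)%:E)).
  exact: measurable_EFin_normr.
have F_ge0 z : (0 <= F z)%E by apply: iterE_ge0.
have intF : (D j).-integrable setT F.
  apply/integrableP; split => //.
  under eq_integral do rewrite gee0_abs //.
  by have := ig [tuple of j :: js]; rewrite iterE_cons.
apply: filterS (integrable_ae measurableT intF) => z /(_ I).
by rewrite ge0_fin_numE.
Qed.

Lemma sampleE_mix_poly n (g : n.-tuple Z -> R) (r : 'rV[R]_K) :
  measurable_fun setT g -> iter_integrable g ->
  sampleE D r g = mix_poly r (fun js => iterRint js g).
Proof.
elim: n g => [|n IHn] g mg ig //.
rewrite -[RHS]/(\sum_j r ord0 j * mix_poly r (fun js => iterRint [tuple of j :: js] g)).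
rewrite [LHS]/= /mixE; apply: eq_bigr => j _; congr (_ * _).
under [X in _ = mix_poly r X]eq_fun do rewrite iterRint_cons.
have [int_mix <-] := integral_mix_poly r
  (fun js => integrable_iterRint_cons j js mg ig).
rewrite /Rintegral; congr fine; apply: ae_eq_integral => //.
- apply/measurable_EFinP.
  exact: (measurable_sampleE r (G := fun zt : Z * n.-tuple Z => g [tuple of zt.1 :: zt.2])
    (measurableT_comp mg (@measurable_cons_pair n))).
- exact: measurable_int int_mix.
apply: filterS (ae_iter_integrable_cons j mg ig) => z ig_z _ /=.
by rewrite IHn //; exact: measurableT_comp mg (@measurable_cons_tuple n z).
Qed.

End iterated_integrals.

Section simplex_calculus.
Context (R : realType) (K : nat).
Implicit Types (r v x : 'rV[R]_K).

Lemma l1_line (t : R) v x : l1 (t *: v + x) = t * l1 v + l1 x.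
Proof. by rewrite /l1 mulr_sumr -big_split; apply: eq_bigr => k _; rewrite !mxE. Qed.

Lemma l1_scale (c : R) x : l1 (c *: x) = c * l1 x.
Proof. by rewrite /l1 mulr_sumr; apply: eq_bigr => k _; rewrite mxE. Qed.

Lemma l1_delta (i : 'I_K) : l1 (delta_mx ord0 i : 'rV[R]_K) = 1.
Proof.
rewrite /l1 (bigD1 i) //= mxE !eqxx big1 ?addr0 // => k ki.
by rewrite mxE (negbTE ki) andbF.
Qed.

Lemma simplex_le1 r j : simplex r -> r ord0 j <= 1.
Proof. by move=> [r_ge0 <-]; rewrite (bigD1 j) //= lerDl sumr_ge0. Qed.

Lemma simplex_normalize r :
  (forall k, 0 <= r ord0 k) -> 0 < l1 r -> simplex ((l1 r)^-1 *: r).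
Proof.
move=> r_ge0 l1_gt0; split => [k|].
  by rewrite mxE mulr_ge0 // invr_ge0 ltW.
by rewrite -/(l1 _) l1_scale mulVf // gt_eqF.
Qed.

Lemma derive_line (g : 'rV[R]_K -> R) (a v : 'rV[R]_K) :
  derive g a v = derive (fun t : R => g (t *: v + a)) 0 1.
Proof.
rewrite /derive; suff -> : (fun h : R => h^-1 *: ((g \o shift a) (h *: v) - g a)) =
    (fun h : R => h^-1 *: (((fun t : R => g (t *: v + a)) \o shift 0) (h *: 1) - g (0 *: v + a))).
  by [].
by apply/funext => h /=; rewrite scale0r add0r addr0 [h *: 1]mulr1.
Qed.

Lemma derivable_normalize_line v x (j : 'I_K) (t0 : R) : l1 (t0 *: v + x) != 0 ->
  derivable (fun t : R => ((l1 (t *: v + x))^-1 *: (t *: v + x)) ord0 j) t0 1.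
Proof.
rewrite l1_line => l1_ne0.
under eq_fun do rewrite !mxE l1_line.
exact: ex_derive.
Qed.

End simplex_calculus.

Section risk_polynomial.
Context (R : realType) (d : measure_display) (Z : measurableType d) (H : Type)
  (K N : nat) (D : 'I_K -> probability Z R) (loss : H -> Z -> R)
  (A : N.-tuple Z -> H).
Hypothesis loss_measurable : measurable_fun [set: N.-tuple Z * Z]
  (fun Sz : N.-tuple Z * Z => loss (A Sz.1) Sz.2).
Hypothesis loss_finite : all_expectations_finite D loss A.
Implicit Types (k : 'I_K) (p r v x : 'rV[R]_K).

Definition component_risk (k : 'I_K) (js : N.-tuple 'I_K) : R :=
  iterRint D js (fun S => Rintegral (D k) setT (fun z => loss (A S) z)).

Lemma ebar_mix_poly k r : ebar D loss A k r = mix_poly r (component_risk k).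
Proof.
have mrisk := measurable_Rintegral_param (D k) loss_measurable.
have mabs_loss := measurable_EFin_normr loss_measurable.
rewrite /ebar (sampleE_mix_poly r mrisk) // => js.
apply: le_lt_trans (loss_finite js k); apply: le_iterE.
- exact: measurable_EFin_normr.
- by have := measurable_integral_param (D k) mabs_loss.
- by [].
- move=> S; apply: EFin_normr_Rintegral_le.
  exact: measurable_fun_pair2 loss_measurable.
Qed.

Lemma f_scale k (c : R) x : c != 0 -> f D loss A k (c *: x) = f D loss A k x.
Proof. by move=> c_ne0; rewrite /f l1_scale invfM scalerA mulrAC mulVf ?mul1r. Qed.

Lemma f_derivable_line k v x (t0 : R) : l1 (t0 *: v + x) != 0 ->
  derivable (fun t : R => f D loss A k (t *: v + x)) t0 1.
Proof.
move=> l1_ne0; under eq_fun do rewrite /f ebar_mix_poly.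
by apply: mix_poly_derivable => j; exact: derivable_normalize_line.
Qed.

Lemma L_N_lineE p v x :
  (fun t : R => L_N D loss A p (t *: v + x)) =
  \sum_k p ord0 k \*: (fun t : R => f D loss A k (t *: v + x)).
Proof. by apply/funext => t; rewrite /L_N fct_sumE. Qed.

Lemma L_N_derivable_line p v x (t0 : R) : l1 (t0 *: v + x) != 0 ->
  derivable (fun t : R => L_N D loss A p (t *: v + x)) t0 1.
Proof.
move=> l1_ne0; rewrite L_N_lineE; apply: derivable_sum => k.
by apply: derivableZ; exact: f_derivable_line.
Qed.

Lemma derive_L_N_line p v x : l1 x != 0 ->
  derive (fun t : R => L_N D loss A p (t *: v + x)) 0 1 =
  \sum_k p ord0 k * derive (f D loss A k) x v.
Proof.
move=> l1_ne0; have l1_ne0' : l1 (0 *: v + x) != 0 by rewrite scale0r add0r.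
rewrite L_N_lineE derive_sum => [|k]; last first.
  by apply: derivableZ; exact: f_derivable_line.
apply: eq_bigr => k _; rewrite deriveZ ?derive_line //.
exact: f_derivable_line.
Qed.

Lemma L_N_simplex_lbound p : has_lbound [set L_N D loss A p r | r in simplex].
Proof.
pose M k := \sum_js `|component_risk k js|.
exists (- \sum_k `|p ord0 k| * M k) => _ [r r_simplex <-].
rewrite /L_N -sumrN; apply: ler_sum => k _.
have l1r : l1 r = 1 := r_simplex.2.
have f_le : `|f D loss A k r| <= M k.
  rewrite /f l1r invr1 scale1r ebar_mix_poly; apply: normr_mix_poly_le => // js.
  by rewrite /M (bigD1 js) //= lerDl sumr_ge0.
rewrite lerNl; apply: le_trans (ler_norm _) _.
by rewrite normrN normrM ler_wpM2l.
Qed.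

Lemma L_star_le_L_N p r : (forall k, 0 <= r ord0 k) -> 0 < l1 r ->
  L_star D loss A p <= L_N D loss A p r.
Proof.
move=> r_ge0 l1_gt0.
have -> : L_N D loss A p r = L_N D loss A p ((l1 r)^-1 *: r).
  by apply: eq_bigr => k _; rewrite f_scale // invr_eq0 gt_eqF.
apply: ge_inf; first exact: L_N_simplex_lbound.
by exists ((l1 r)^-1 *: r) => //; exact: simplex_normalize.
Qed.

End risk_polynomial.

Theorem lemmaB2 (R : realType) (d : measure_display) (Z : measurableType d)
  (H : Type) (K N : nat) (D : 'I_K -> probability Z R) (loss : H -> Z -> R)
  (A : N.-tuple Z -> H)
  (HN : (0 < N)%N)
  (Hmeas : measurable_fun [set: N.-tuple Z * Z]
             (fun Sz : N.-tuple Z * Z => loss (A Sz.1) Sz.2))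
  (Hfin : all_expectations_finite D loss A)
  (p : 'rV[R]_K) (Hp : simplex_pos p)
  (Hopt : L_same D loss A p = L_star D loss A p) :
  forall i : 'I_K, \sum_k p ord0 k * partial (f D loss A k) p i = 0.
Proof.
move=> i; have [p_gt0 l1p] := Hp; set e : 'rV[R]_K := delta_mx ord0 i.
have pi_le1 : p ord0 i <= 1 by apply: simplex_le1; split => // k; exact/ltW.
have pi_gt0 := p_gt0 i.
have l1_line_gt0 t : t \in `]- p ord0 i, p ord0 i[ -> 0 < l1 (t *: e + p).
  by rewrite l1_line l1_delta [l1 p]l1p in_itv /= => /andP[? _]; lra.
have line_min t : t \in `]- p ord0 i, p ord0 i[ ->
    L_N D loss A p (0 *: e + p) <= L_N D loss A p (t *: e + p).
  move=> t_in; rewrite scale0r add0r -/(L_same _ _ _ p) Hopt.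
  apply: (L_star_le_L_N Hmeas Hfin p) (l1_line_gt0 t t_in) => k.
  rewrite !mxE eqxx /=; case: (k =P i) => [->|_] /=; last by rewrite mulr0 add0r ltW.
  by move: t_in; rewrite in_itv /= mulr1 => /andP[? _]; lra.
have line_derivable (t : R) : t \in `]- p ord0 i, p ord0 i[ ->
    derivable (fun s : R => L_N D loss A p (s *: e + p)) t 1.
  by move=> t_in; exact/(L_N_derivable_line Hmeas Hfin)/lt0r_neq0/l1_line_gt0.
have zero_in : (0 : R) \in `]- p ord0 i, p ord0 i[.
  by rewrite in_itv /=; apply/andP; split; lra.
have min_deriv := derive1_at_min (ltW (gt0_cp pi_gt0).2) line_derivable zero_in line_min.
rewrite -[RHS](@derive_val _ _ _ _ _ _ _ min_deriv).
by rewrite derive_L_N_line // [l1 p]l1p oner_neq0.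
Qed.
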